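(* Let $\Gamma$ be a lattice with periodic boundary conditions as below. A set of faces $F_c\subseteq C_2(\Gamma)$ is a cut set of $\Gamma$ if and only if some nontrivial (i.e. not equal to the identity) $X$-type stabilizer of the 3D toric code on $\Gamma$ has its support contained in $F_c$.
   Context: $\Gamma$ is a finite, connected three-dimensional cell complex without boundary (periodic boundary conditions, e.g. a cellulation of the 3-torus), with edges $C_1(\Gamma)$, faces $C_2(\Gamma)$, volumes $C_3(\Gamma)$; every face lies in the boundary of exactly two distinct volumes, and the dual complex is connected. $\partial(\nu)$ denotes the set of boundary faces of a volume $\nu$, and $\iota(e)$ the set of faces containing edge $e$ in their boundary. The 3D toric code on $\Gamma$ has one qubit per face and stabilizer group generated by $B_e=\prod_{f\in\iota(e)}Z_f$ and $A_\nu=\prod_{f\in\partial(\nu)}X_f$; the $X$-type stabilizers are the products of the $A_\nu$. A face path is a sequence of faces $\rho=(f_1,\dots,f_m)$ together with pairwise distinct volumes $\Lambda(\rho)=(\nu_1,\dots,\nu_{m-1})$ with $f_i,f_{i+1}\in\partial(\nu_i)$. A set of faces $K$ is a cut set of $\Gamma$ if there exist volumes $\nu,\nu'$ such that every face path $\rho$ with $f_1\in\partial(\nu)$, $f_m\in\partial(\nu')$ and $\nu,\nu'\notin\Lambda(\rho)$ satisfies $K\cap\rho\ne\emptyset$. *)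

From mathcomp Require Import all_boot.
Set Implicit Arguments. Unset Strict Implicit. Unset Printing Implicit Defensive.

(* A 3D cell complex is given by its finite types of faces F and volumes V
   together with the face-boundary map  bnd : V -> {set F}  (bnd v = ∂(v)).
   Edges only enter the Z-type stabilizers B_e, which play no role here. *)

Definition vols_of (F V : finType) (bnd : V -> {set F}) (f : F) : {set V} :=
  [set v | f \in bnd v].

Definition dual_adj (F V : finType) (bnd : V -> {set F}) : rel V :=
  fun v w => [exists f, (f \in bnd v) && (f \in bnd w)].

Definition dual_connected (F V : finType) (bnd : V -> {set F}) : Prop :=
  forall v w : V, connect (dual_adj bnd) v w.

(* X-type Pauli operators on the face qubits, up to phase: prod_f X_f^(x f),
   encoded by the exponent vector x : F -> F_2 (bool, addition = xor).
   Multiplication of operators is pointwise xor; identity is the zero vector. *)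
Definition Xop (F : finType) := {ffun F -> bool}.
Definition Xid (F : finType) : Xop F := [ffun => false].
Definition Xsupport (F : finType) (x : Xop F) : {set F} := [set f | x f].

Definition A_vol (F V : finType) (bnd : V -> {set F}) (v : V) : Xop F :=
  [ffun f => f \in bnd v].

Definition Xstab_of (F V : finType) (bnd : V -> {set F}) (S : {set V}) : Xop F :=
  [ffun f => \big[addb/false]_(v in S) A_vol bnd v f].

Definition is_X_stabilizer (F V : finType) (bnd : V -> {set F}) (x : Xop F) : Prop :=
  exists S : {set V}, x = Xstab_of bnd S.

(* A face path rho = (f_1,...,f_m), Lambda(rho) = (v_1,...,v_{m-1})
   is encoded by its first face f0 = f_1 and the list s = [(v_1,f_2);...;(v_{m-1},f_m)].
   fpath checks f_i, f_{i+1} in ∂(v_i). *)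
Fixpoint fpath (F V : finType) (bnd : V -> {set F}) (f0 : F) (s : seq (V * F)) : bool :=
  match s with
  | [::] => true
  | (v, f) :: s' => [&& f0 \in bnd v, f \in bnd v & fpath bnd f s']
  end.

Definition face_path (F V : finType) (bnd : V -> {set F}) (f0 : F) (s : seq (V * F)) : bool :=
  fpath bnd f0 s && uniq (map fst s).

Definition path_faces (F V : finType) (f0 : F) (s : seq (V * F)) : seq F :=
  f0 :: map snd s.

Definition cut_set (F V : finType) (bnd : V -> {set F}) (K : {set F}) : Prop :=
  exists nu nu' : V,
    forall (f0 : F) (s : seq (V * F)),
      face_path bnd f0 s ->
      f0 \in bnd nu ->
      last f0 (map snd s) \in bnd nu' ->
      nu \notin map fst s -> nu' \notin map fst s ->
      has (fun f => f \in K) (path_faces f0 s).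

From Pilot Require Import Defs.
From mathcomp Require Import all_boot.

(* Since every face bounds exactly two volumes, the stabilizer prod_{v in S} A_v
   acts on a face exactly when the face separates S from its complement.  A face
   path leading from a volume in S to a volume outside S must therefore cross the
   support of this stabilizer, so a nontrivial stabilizer supported in F_c makes
   F_c a cut set.  Conversely, if F_c separates nu from nu', let S be the set of
   volumes reachable from nu through faces outside F_c: its stabilizer is
   supported in F_c by construction, and it is nontrivial because S contains nu
   but not nu', while the dual complex is connected.  If nu = nu', each face of
   the boundary of nu is a one-face path from nu to itself, so A_nu is supported
   in F_c. *)

Section XStabilizers.

Context {F V : finType} {bnd : V -> {set F}}.
Hypothesis two_vols : forall f : F, #|vols_of bnd f| = 2.
Implicit Types (K : {set F}) (S : {set V}) (f : F) (s : seq (V * F))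
  (a b u v w x nu : V) (p : seq V).

Definition separates (K : {set F}) (nu nu' : V) : Prop :=
  forall (f0 : F) (s : seq (V * F)),
    face_path bnd f0 s ->
    f0 \in bnd nu ->
    last f0 (map snd s) \in bnd nu' ->
    nu \notin map fst s -> nu' \notin map fst s ->
    has (fun f => f \in K) (path_faces f0 s).

Lemma face_vols f : exists a b, [/\ a != b, f \in bnd a & f \in bnd b].
Proof.
have /eqP/cards2P[a [b [ab vols_f]]] := two_vols f.
have in_bnd v : v \in vols_of bnd f -> f \in bnd v by rewrite inE.
by exists a, b; split; rewrite // in_bnd // vols_f !inE eqxx ?orbT.
Qed.

Lemma vols_of_pair {f a b} :
  a != b -> f \in bnd a -> f \in bnd b -> vols_of bnd f = [set a; b].
Proof.
move=> ab fa fb; apply/esym/eqP; rewrite eqEcard two_vols cards2 ab andbT.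
by apply/subsetP=> v; rewrite !inE => /orP[]/eqP->.
Qed.

Lemma Xstab_of_face S {f a b} : a != b -> f \in bnd a -> f \in bnd b ->
  Xstab_of bnd S f = (a \in S) (+) (b \in S).
Proof.
move=> ab fa fb; rewrite ffunE.
have A_volE v : A_vol bnd v f = (v \in [set a; b]).
  by rewrite ffunE -(vols_of_pair ab fa fb) inE.
under eq_bigr => v _ do rewrite A_volE.
rewrite big_mkcond (bigD1 a) //= (bigD1 b) 1?eq_sym //=.
rewrite big1 => [|v /andP[va vb]]; last first.
  by rewrite !inE (negbTE va) (negbTE vb) if_same.
by rewrite !inE !eqxx orbT /=; case: (a \in S); case: (b \in S).
Qed.

Lemma Xstab_of_cross {S f u w} : u \in S -> w \notin S ->
  f \in bnd u -> f \in bnd w -> Xstab_of bnd S f.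
Proof.
move=> uS wS fu fw; have uw : u != w by apply: contraNneq wS => <-.
by rewrite (Xstab_of_face S uw fu fw) uS (negbTE wS).
Qed.

Lemma Xstab_of_neq0_cross {S} :
  Xstab_of bnd S != Xid F -> exists u w, u \in S /\ w \notin S.
Proof.
move=> /eqP S_neq0; have [f xf] : exists f, Xstab_of bnd S f.
  apply/existsP; apply: contra_notT S_neq0; rewrite negb_exists => /forallP x0.
  by apply/ffunP => f; rewrite [RHS]ffunE; apply/negbTE/x0.
have [a [b [ab fa fb]]] := face_vols f.
move: xf; rewrite (Xstab_of_face S ab fa fb).
by case aS: (a \in S); case bS: (b \in S) => // _; [exists a, b | exists b, a];
  rewrite aS bS.
Qed.

Lemma Xstab_of_neq0 {S u w} : dual_connected bnd -> u \in S -> w \notin S ->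
  Xstab_of bnd S != Xid F.
Proof.
move=> dual_conn uS wS; apply/eqP => /ffunP S_eq0.
suff S_closed : closed (dual_adj bnd) S.
  by move: (closed_connect S_closed (dual_conn u w)); rewrite uS (negbTE wS).
move=> a b /existsP[f /andP[fa fb]]; have [->|ab] := eqVneq a b; first by [].
move: (S_eq0 f); rewrite (Xstab_of_face S ab fa fb) ffunE.
by case: (a \in S); case: (b \in S).
Qed.

(* [Defs.fpath] is shadowed by the [fpath] notation of path.v. *)
Lemma fpath_cross {S f0 s u w} : u \in S -> w \notin S ->
  f0 \in bnd u -> Defs.fpath bnd f0 s -> last f0 (map snd s) \in bnd w ->
  has (Xstab_of bnd S) (path_faces f0 s).
Proof.
rewrite /path_faces; elim: s f0 u => [|[v f] s IHs] f0 u uS wS f0u /=.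
  by move=> _ f0w; rewrite (Xstab_of_cross uS wS f0u f0w).
case/and3P=> f0v fv fpath_s s_last; case vS: (v \in S).
  by apply/orP; right; apply: IHs vS wS fv fpath_s s_last.
by apply/orP; left; apply: Xstab_of_cross uS _ f0u f0v; rewrite vS.
Qed.

Lemma Xstab_of_separates {K S u w} : u \in S -> w \notin S ->
  Xsupport (Xstab_of bnd S) \subset K -> separates K u w.
Proof.
move=> uS wS supp_K f0 s /andP[fpath_s _] f0u s_last _ _.
apply: sub_has (fpath_cross uS wS f0u fpath_s s_last) => f xf.
by apply: (subsetP supp_K); rewrite inE.
Qed.

Definition dual_adj_avoiding (K : {set F}) : rel V :=
  fun a b => [exists g, [&& g \in bnd a, g \in bnd b & g \notin K]].

Lemma face_path_of_dual_path {K x p} :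
  path (dual_adj_avoiding K) x p -> p != [::] ->
  exists f0 s, [/\ Defs.fpath bnd f0 s, f0 \in bnd x,
    last f0 (map snd s) \in bnd (last x p),
    all (fun f => f \notin K) (path_faces f0 s) & rcons (map fst s) (last x p) = p].
Proof.
elim: p x => [//|y p IHp] x /= /andP[/existsP[g /and3P[gx gy gK]] path_p] _.
case: p IHp path_p => [|z p] IHp path_p; first by exists g, [::]; rewrite /= gx gy gK.
have [f0 [s [fpath_s f0y s_last s_avoid s_vols]]] := IHp y path_p isT.
by exists g, ((y, f0) :: s); rewrite /= gy f0y fpath_s gK s_vols.
Qed.

Lemma separates_not_connect {K nu nu'} : nu != nu' -> separates K nu nu' ->
  ~~ connect (dual_adj_avoiding K) nu nu'.
Proof.
move=> nu_nu' sep; apply/negP => /connectP[p path_p].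
case: (shortenP path_p) => q path_q uniq_q _ q_last {p path_p}.
have q_nil : q != [::] by apply: contraNneq nu_nu' => q_nil; rewrite q_last q_nil.
have [f0 [s [fpath_s f0nu s_last s_avoid s_vols]]] :=
  face_path_of_dual_path path_q q_nil.
rewrite -q_last in s_last s_vols.
move: uniq_q; rewrite -s_vols cons_uniq rcons_uniq mem_rcons inE negb_or.
case/andP=> /andP[_ nu_s] /andP[nu'_s uniq_s].
have face_path_s : face_path bnd f0 s by rewrite /face_path fpath_s.
have /hasP[f f_path fK] := sep f0 s face_path_s f0nu s_last nu_s nu'_s.
by move/allP: s_avoid => /(_ f f_path); rewrite fK.
Qed.

Lemma Xsupport_reach K nu :
  Xsupport (Xstab_of bnd [set w | connect (dual_adj_avoiding K) nu w]) \subset K.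
Proof.
apply/subsetP => f; rewrite inE; apply: contraTT => fK.
have [a [b [ab fa fb]]] := face_vols f.
have adj_ab c d : f \in bnd c -> f \in bnd d -> dual_adj_avoiding K c d.
  by move=> fc fd; apply/existsP; exists f; rewrite fc fd fK.
rewrite (Xstab_of_face _ ab fa fb) !inE.
suff -> : connect (dual_adj_avoiding K) nu a = connect (dual_adj_avoiding K) nu b.
  by rewrite addbb.
apply/idP/idP => [nu_a | nu_b].
- exact: connect_trans nu_a (connect1 (adj_ab _ _ fa fb)).
- exact: connect_trans nu_b (connect1 (adj_ab _ _ fb fa)).
Qed.

Lemma Xstab_of_set1 v : Xstab_of bnd [set v] = A_vol bnd v.
Proof. by apply/ffunP => f; rewrite ffunE big_set1. Qed.

Lemma Xsupport_A_vol v : Xsupport (A_vol bnd v) = bnd v.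
Proof. by apply/setP => f; rewrite inE ffunE. Qed.

Lemma A_vol_neq0 v : bnd v != set0 -> A_vol bnd v != Xid F.
Proof.
case/set0Pn => f fv; apply/eqP => /ffunP/(_ f).
by rewrite !ffunE fv.
Qed.

Lemma separates_refl_subset K v : separates K v v -> bnd v \subset K.
Proof.
move=> sep; apply/subsetP => f fv.
by have := sep f [::] isT fv fv isT isT; rewrite /= orbF.
Qed.

End XStabilizers.

Arguments separates {F V} bnd K nu nu'.
Arguments dual_adj_avoiding {F V} bnd K.

Theorem lemma8 (F V : finType) (bnd : V -> {set F})
  (two_vols : forall f : F, #|vols_of bnd f| = 2)
  (cells_nonempty : forall v : V, bnd v != set0)
  (dual_conn : dual_connected bnd)
  (Fc : {set F}) :
  cut_set bnd Fc <->
  exists x : Xop F, [/\ is_X_stabilizer bnd x, x != Xid F & Xsupport x \subset Fc].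
Proof.
split.
- case=> nu [nu' sep]; have [eq_nu|nu_nu'] := eqVneq nu nu'.
    rewrite -eq_nu in sep; exists (A_vol bnd nu).
    split; first by exists [set nu]; rewrite Xstab_of_set1.
      exact: A_vol_neq0.
    by rewrite Xsupport_A_vol; apply: separates_refl_subset sep.
  pose S := [set w | connect (dual_adj_avoiding bnd Fc) nu w].
  have nuS : nu \in S by rewrite inE connect0.
  have nu'S : nu' \notin S by rewrite inE (separates_not_connect nu_nu' sep).
  exists (Xstab_of bnd S); split; first by exists S.
    by apply: (Xstab_of_neq0 two_vols dual_conn nuS nu'S).
  exact: Xsupport_reach.
- case=> _ [[S ->] S_neq0 supp_Fc].
  have [u [w [uS wS]]] := Xstab_of_neq0_cross two_vols S_neq0.
  by exists u, w; apply: Xstab_of_separates uS wS supp_Fc.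
Qed.
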